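(* For $i\in\{1,\dots,m\}$ let $X_i\sim\operatorname{Ber}(p_i,s_i)$ with $p_i\in[0,1)$, $s_i>0$, and let $P_i\sim\operatorname{Poi}\!\left(\ln\frac{1}{1-p_i},\bar s_i\right)$ with $\bar s_i\ge s_i$, all these $2m$ variables being independent. Let $B=\sum_{i=1}^m X_i$ and $P=\sum_{i=1}^m P_i$. Then $\mathbb{P}(B>1)\le\mathbb{P}(P>1)$.
   Context: For $s>0$: $X\sim\operatorname{Ber}(p,s)$ means $X=sZ$ with $Z\sim\operatorname{Ber}(p)$ (Bernoulli), and $P\sim\operatorname{Poi}(\lambda,s)$ means $P=sZ$ with $Z\sim\operatorname{Poi}(\lambda)$ (Poisson with mean $\lambda$). *)

From HB Require Import structures.
From mathcomp Require Import all_boot all_order all_algebra.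
From mathcomp Require Import all_classical all_reals all_analysis.
Set Implicit Arguments. Unset Strict Implicit. Unset Printing Implicit Defensive.
Import Order.TTheory GRing.Theory Num.Theory.
Local Open Scope classical_set_scope.
Local Open Scope ring_scope.

Definition mutually_independent {d : measure_display} {T : measurableType d}
  {R : realType} (P : probability T R) {I : finType} (Y : I -> T -> R) : Prop :=
  forall (J : {set I}) (A : I -> set R),
    (forall j, measurable (A j)) ->
    P [set t | forall j, j \in J -> A j (Y j t)] =
    (\prod_(j in J) P (Y j @^-1` A j))%E.

From HB Require Import structures.
From mathcomp Require Import all_boot all_order all_algebra.
From mathcomp Require Import all_classical all_reals all_analysis.
From mathcomp Require Import measurable_realfun.
Import Order.TTheory GRing.Theory Num.Theory.
Local Open Scope classical_set_scope.
Local Open Scope ring_scope.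

(* Only the *support* of the vector (X_1, ..., X_m), i.e. the set
   of indices i with X_i <> 0, matters for the event {B > 1}: on the event that
   the support is A, B equals the sum of the s_i over A.  Since
   P(X_i = 0) = 1 - p_i = exp(-ln(1/(1-p_i))) = P(P_i = 0), independence shows
   that the support of (P_1, ..., P_m) has the same law as that of
   (X_1, ..., X_m).  Moreover, on the event that the support of the P_i is A,
   their sum is at least the sum of the sbar_i >= s_i over A.  Hence
     P(B > 1) = sum_{A : sum_A s > 1} P(supp X = A)
              = sum_{A : sum_A s > 1} P(supp P = A) <= P(P > 1). *)

Section SupportEvents.
Context {d : measure_display} {T : measurableType d} {R : realType}.
Variable P : probability T R.

(* Independence is inherited by a reindexed family, provided the reindexing
   has a left inverse (so that it is injective and every test family on the
   new indices lifts to the old ones). *)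
Lemma mutually_independent_comp {I J : finType} {f : J -> I} {g : I -> J}
    {Y : I -> T -> R} :
  cancel f g -> mutually_independent P Y ->
  mutually_independent P (fun j => Y (f j)).
Proof.
move=> fK indY K A mA.
have := indY (f @: K)%SET (A \o g) (fun i => mA (g i)).
rewrite big_imset /=; last by move=> x y _ _; exact: (can_inj fK).
under eq_bigr do rewrite fK.
move=> <-; congr (P _); apply/seteqP; split=> t /= h.
- by move=> _ /imsetP[j jK ->]; rewrite fK; exact: h.
- by move=> j jK; rewrite -[j in A j]fK; apply: h; exact: imset_f.
Qed.

Lemma mutually_independent_suml {I : finType} {Y Y' : I -> T -> R} :
  mutually_independent P
    (fun j : I + I => match j with inl i => Y i | inr i => Y' i end) ->
  mutually_independent P Y.
Proof.
exact: (@mutually_independent_comp _ _ inl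
  (fun j => match j with inl i | inr i => i end) _ (fun=> erefl)).
Qed.

Lemma mutually_independent_sumr {I : finType} {Y Y' : I -> T -> R} :
  mutually_independent P
    (fun j : I + I => match j with inl i => Y i | inr i => Y' i end) ->
  mutually_independent P Y'.
Proof.
exact: (@mutually_independent_comp _ _ inr
  (fun j => match j with inl i | inr i => i end) _ (fun=> erefl)).
Qed.

Definition nonzero_iff (b : bool) : set R := [set x | (x != 0) = b].

Lemma nonzero_iffE (b : bool) :
  nonzero_iff b = if b then ~` [set 0] else [set 0].
Proof.
apply/seteqP; split=> x; rewrite /nonzero_iff; case: b => /=.
- by move=> /eqP.
- by move=> /negbFE /eqP.
- by move=> /eqP.
- by move=> ->; rewrite eqxx.
Qed.

Context {I : finType}.

Definition support_event (Y : I -> T -> R) (A : {set I}) : set T :=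
  [set t | forall i, (i \in A) = (Y i t != 0)].

Lemma support_eventE (Y : I -> T -> R) (A : {set I}) :
  support_event Y A =
  [set t | forall i, i \in [set: I]%SET -> nonzero_iff (i \in A) (Y i t)].
Proof.
apply/seteqP; split=> t h i; first by move=> _; exact/esym/h.
by apply/esym/h; rewrite inE.
Qed.

Lemma support_event_prob (Y : I -> T -> R) (A : {set I}) :
  mutually_independent P Y ->
  P (support_event Y A) = (\prod_i P (Y i @^-1` nonzero_iff (i \in A)))%E.
Proof.
move=> indY; rewrite support_eventE (indY _ (fun i => nonzero_iff (i \in A))).
  by apply: eq_bigl => i; rewrite inE.
by move=> i; rewrite nonzero_iffE; case: ifP => _ //; exact: measurableC.
Qed.

Lemma support_event_measurable (Y : I -> T -> R) (A : {set I}) :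
  (forall i, measurable (Y i @^-1` [set 0])) ->
  measurable (support_event Y A).
Proof.
move=> mY0; have -> : support_event Y A =
    \bigcap_(i in [set: I]) (Y i @^-1` nonzero_iff (i \in A)).
  by rewrite support_eventE; apply/seteqP; split=> t h i _; exact: h.
apply: fin_bigcap_measurable => // i _; rewrite nonzero_iffE.
by case: ifP => _ //; rewrite -preimage_setC; exact: measurableC.
Qed.

Lemma support_event_trivIset (Y : I -> T -> R) (D : set {set I}) :
  trivIset D (support_event Y).
Proof. by move=> A B _ _ [t [hA hB]]; apply/setP => i; rewrite hA hB. Qed.

Lemma support_event_prob_eq (Y Y' : I -> T -> R) (A : {set I}) :
  mutually_independent P Y -> mutually_independent P Y' ->
  (forall i, measurable (Y i @^-1` [set 0])) ->
  (forall i, measurable (Y' i @^-1` [set 0])) ->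
  (forall i, P (Y i @^-1` [set 0]) = P (Y' i @^-1` [set 0])) ->
  P (support_event Y A) = P (support_event Y' A).
Proof.
move=> indY indY' mY0 mY'0 eq0.
rewrite !support_event_prob //; apply: eq_bigr => i _; rewrite nonzero_iffE.
by case: ifP => _ //; rewrite -!preimage_setC !probability_setC // eq0.
Qed.

Lemma bigcup_support_event_prob_eq {Y Y' : I -> T -> R} {D : set {set I}} :
  mutually_independent P Y -> mutually_independent P Y' ->
  (forall i, measurable (Y i @^-1` [set 0])) ->
  (forall i, measurable (Y' i @^-1` [set 0])) ->
  (forall i, P (Y i @^-1` [set 0]) = P (Y' i @^-1` [set 0])) ->
  P (\bigcup_(A in D) support_event Y A) =
  P (\bigcup_(A in D) support_event Y' A).
Proof.
move=> indY indY' mY0 mY'0 eq0.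
have bigcupE (V : I -> T -> R) : (forall i, measurable (V i @^-1` [set 0])) ->
    P (\bigcup_(A in D) support_event V A) = (\sum_(A \in D) P (support_event V A))%E.
  move=> mV0; apply: measure_fin_bigcup; first exact: finite_finset.
    exact: support_event_trivIset.
  by move=> A _; exact: support_event_measurable.
rewrite !bigcupE //; apply: eq_fsbigr => A _; exact: support_event_prob_eq.
Qed.

Lemma sum_on_support_event {Y : I -> T -> R} {c : I -> R} {A t} :
  (forall i t, Y i t != 0 -> Y i t = c i) ->
  support_event Y A t -> \sum_i Y i t = \sum_(i in A) c i.
Proof.
move=> Yc hA; rewrite [RHS]big_mkcond; apply: eq_bigr => i _.
by rewrite hA; case: ifPn => [/Yc//|/negbNE/eqP].
Qed.

Lemma sum_on_support_event_ge {Y : I -> T -> R} {c : I -> R} {A t} :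
  (forall i t, Y i t != 0 -> c i <= Y i t) ->
  support_event Y A t -> \sum_(i in A) c i <= \sum_i Y i t.
Proof.
move=> Yc hA; rewrite big_mkcond; apply: ler_sum => i _.
by rewrite hA; case: ifPn => [/Yc//|/negbNE/eqP->].
Qed.

Lemma sum_gt_support_decomposition {Y : I -> T -> R} {c : I -> R} {a : R} :
  (forall i t, Y i t != 0 -> Y i t = c i) ->
  [set t | a < \sum_i Y i t] =
  \bigcup_(A in [set A : {set I} | a < \sum_(i in A) c i]) support_event Y A.
Proof.
move=> Yc; apply/seteqP; split=> t /=.
- move=> h; exists [set i | Y i t != 0]%SET; last by move=> i; rewrite inE.
  by rewrite /= -(sum_on_support_event (t := t) Yc) // => i; rewrite inE.
- by move=> [A hA tA]; rewrite (sum_on_support_event Yc tA).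
Qed.

End SupportEvents.

Lemma measurable_sum_gt {d : measure_display} {T : measurableType d}
    {R : realType} {I : finType} (Y : I -> T -> R) (a : R) :
  (forall i, measurable_fun setT (Y i)) -> measurable [set t | a < \sum_i Y i t].
Proof.
move=> mY; have := measurable_sum (index_enum I) mY measurableT
  (measurable_itv `]a, +oo[%O).
by rewrite setTI; congr measurable; apply/seteqP; split=> t /=;
  rewrite in_itv /= andbT.
Qed.

Lemma bernoulli_prob_false {R : realType} (p : R) :
  0 <= p <= 1 -> bernoulli_prob p [set false] = (1 - p)%:E.
Proof.
move=> p01; rewrite bernoulli_probE // !diracE memNset // mem_set //=.
by rewrite mule0 add0e mule1.
Qed.

Lemma poisson_prob_zero {R : realType} (r : R) :
  0 <= r -> poisson_prob r 0%N [set 0%N] = (expR (- r))%:E.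
Proof.
rewrite le_eqVlt => /predU1P[<-|r_gt0].
  by rewrite /poisson_prob ltxx diracE mem_set // oppr0 expR0.
rewrite /poisson_prob r_gt0 esum_set1 ?lee_fin ?poisson_pmf_ge0 //.
by rewrite /poisson_pmf r_gt0 expr0 fact0 invr1 !mul1r.
Qed.

(* The Poisson rate ln(1/(1-p)) is chosen so that the Poisson variable
   vanishes with the same probability 1 - p as a Bernoulli(p) variable. *)
Lemma poisson_prob_zero_matched {R : realType} (p : R) :
  0 <= p < 1 -> poisson_prob (ln ((1 - p)^-1)) 0%N [set 0%N] = (1 - p)%:E.
Proof.
move=> /andP[p_ge0 p_lt1]; have q_gt0 : 0 < 1 - p by rewrite subr_gt0.
rewrite poisson_prob_zero; last by rewrite ln_ge0 // invf_ge1 // lerBlDr lerDl.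
by rewrite lnV ?posrE // opprK lnK ?posrE.
Qed.

Lemma scaled_zero_preimage {T : Type} {R : realType} {c : R} {N : T -> nat}
    {Y : T -> R} :
  0 < c -> (forall t, Y t = c * (N t)%:R) -> Y @^-1` [set 0] = N @^-1` [set 0%N].
Proof.
move=> c_gt0 YE; apply/seteqP; split=> t /=; rewrite YE.
  by move/eqP; rewrite mulf_eq0 gt_eqF //= pnatr_eq0 => /eqP.
by move=> ->; rewrite mulr0.
Qed.

Lemma scaled_nonzero_ge {R : realType} {c : R} {n : nat} :
  0 < c -> c * n%:R != 0 -> c <= c * n%:R.
Proof.
move=> c_gt0; case: n => [|n _]; first by rewrite mulr0 eqxx.
by rewrite -[leLHS]mulr1 ler_pM2l // ler1n.
Qed.

Lemma scaled_bool_nonzero {R : realType} {c : R} {b : bool} :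
  c * b%:R != 0 -> c * b%:R = c.
Proof. by case: b => /=; rewrite ?mulr1 ?mulr0 ?eqxx. Qed.

Section ScaledRandomVariables.
Context {d : measure_display} {T : measurableType d} {R : realType}.
Context {P : probability T R} {c : R} {Y : T -> R}.
Hypothesis c_gt0 : 0 < c.

Lemma scaled_bool_zero {Z : {RV P >-> bool}} :
  (forall t, Y t = c * (Z t)%:R) ->
  measurable (Y @^-1` [set 0]) /\
  P (Y @^-1` [set 0]) = distribution P Z [set false].
Proof.
move=> YE; have -> : Y @^-1` [set 0] = Z @^-1` [set false].
  rewrite (scaled_zero_preimage c_gt0 YE).
  by apply/seteqP; split=> t /=; case: (Z t).
by split; [exact: measurable_funPTI | ].
Qed.

Lemma scaled_count_zero {N : {RV P >-> nat}} :
  (forall t, Y t = c * (N t)%:R) ->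
  measurable (Y @^-1` [set 0]) /\
  P (Y @^-1` [set 0]) = distribution P N [set 0%N].
Proof.
move=> YE; rewrite (scaled_zero_preimage c_gt0 YE).
by split; [exact: measurable_funPTI | ].
Qed.

Lemma scaled_count_measurable {N : {RV P >-> nat}} :
  (forall t, Y t = c * (N t)%:R) -> measurable_fun setT Y.
Proof.
move=> YE; rewrite (_ : Y = fun t => c * (N t)%:R); last exact/funext.
apply: measurable_funM => //.
exact: measurableT_comp (measurable_funPT N).
Qed.

End ScaledRandomVariables.

Theorem lemma3 (R : realType) (d : measure_display) (T : measurableType d)
  (P : probability T R) (m : nat)
  (p s sbar : 'I_m -> R)
  (Z : 'I_m -> {RV P >-> bool}) (W : 'I_m -> {RV P >-> nat})
  (X Pv : 'I_m -> T -> R) :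
  (forall i, 0 <= p i < 1) ->
  (forall i, 0 < s i) ->
  (forall i, s i <= sbar i) ->
  (forall i, distribution P (Z i) = bernoulli_prob (p i)) ->
  (forall i, distribution P (W i) = poisson_prob (ln ((1 - p i)^-1)) 0%N) ->
  (forall i t, X i t = s i * (Z i t)%:R) ->
  (forall i t, Pv i t = sbar i * (W i t)%:R) ->
  mutually_independent P
    (fun j : 'I_m + 'I_m => match j with inl i => X i | inr i => Pv i end) ->
  (P [set t | (1 < \sum_(i < m) X i t)%R] <= P [set t | (1 < \sum_(i < m) Pv i t)%R])%E.
Proof.
move=> hp hs hsb hZ hW hX hPv hind.
have sbar_gt0 i : 0 < sbar i by exact: lt_le_trans (hs i) (hsb i).
have mX0 i := (scaled_bool_zero (hs i) (hX i)).1.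
have mPv0 i := (scaled_count_zero (sbar_gt0 i) (hPv i)).1.
have zero_prob_eq i : P (X i @^-1` [set 0]) = P (Pv i @^-1` [set 0]).
  have /andP[p_ge0 p_lt1] := hp i.
  rewrite (scaled_bool_zero (hs i) (hX i)).2 (scaled_count_zero (sbar_gt0 i) (hPv i)).2.
  by rewrite hZ hW bernoulli_prob_false ?p_ge0 ?ltW // poisson_prob_zero_matched ?hp.
have X_nonzero i t : X i t != 0 -> X i t = s i.
  by rewrite hX; exact: scaled_bool_nonzero.
have Pv_nonzero i t : Pv i t != 0 -> s i <= Pv i t.
  by rewrite hPv => /(scaled_nonzero_ge (sbar_gt0 i)); exact: le_trans (hsb i).
rewrite (sum_gt_support_decomposition X_nonzero).
rewrite (bigcup_support_event_prob_eq _ (mutually_independent_suml _ hind)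
  (mutually_independent_sumr _ hind) mX0 mPv0 zero_prob_eq).
apply: le_measure; rewrite ?inE.
- by apply: fin_bigcup_measurable; [exact: finite_finset |
    move=> A _; exact: support_event_measurable].
- by apply: measurable_sum_gt => i; exact: scaled_count_measurable (hPv i).
- move=> t [A hA tA] /=; apply: lt_le_trans hA _.
  exact: sum_on_support_event_ge Pv_nonzero tA.
Qed.
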